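(* For every $n\ge 4$, the triangular graph $T_n$ is not eigensharp; that is, $N(T_n)\ge n$.
   Context: The triangular graph $T_n$ is the line graph of the complete graph $K_n$ (vertices are the 2-subsets of $\{1,\dots,n\}$, adjacent iff they intersect). A $t$-address is a $t$-tuple with entries in $\{0,a,b\}$ (three distinct symbols). An addressing of length $t$ of a connected graph $G$ is an assignment of $t$-addresses to the vertices such that for any two vertices $u,v$, the graph distance $d(u,v)$ equals the number of coordinates in which one of the two addresses equals $a$ and the other equals $b$. $N(G)$ is the minimum such $t$. With $D(G)$ the distance matrix of $G$ and $n_\pm(D(G))$ its numbers of positive/negative eigenvalues, one always has $N(G)\ge\max(n_+(D(G)),n_-(D(G)))$; $G$ is called eigensharp if equality holds. For $n\ge 4$, $D(T_n)$ has spectrum $(n-1)(n-2)$ (multiplicity 1), $2-n$ (multiplicity $n-1$), and $0$ (multiplicity $\binom n2-n$), so $\max(n_+(D(T_n)),n_-(D(T_n)))=n-1$. *)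

From mathcomp Require Import all_boot.
Set Implicit Arguments. Unset Strict Implicit. Unset Printing Implicit Defensive.

Definition walk_of_len (T : finType) (e : rel T) (x y : T) (k : nat) : Prop :=
  exists p : seq T, [/\ size p = k, path e x p & last x p = y].

Definition is_dist (T : finType) (e : rel T) (x y : T) (k : nat) : Prop :=
  walk_of_len e x y k /\ forall j, j < k -> ~ walk_of_len e x y j.

Inductive sym := S0 | Sa | Sb.

Definition ab_pair (s1 s2 : sym) : bool :=
  match s1, s2 with
  | Sa, Sb | Sb, Sa => true
  | _, _ => false
  end.

Definition addr_dist (t : nat) (u v : 'I_t -> sym) : nat :=
  \sum_(i < t) ab_pair (u i) (v i).

Definition addressing (T : finType) (e : rel T) (t : nat) (f : T -> 'I_t -> sym) : Prop :=
  forall u v : T, is_dist e u v (addr_dist (f u) (f v)).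

(* Triangular graph T_n: vertices are the 2-subsets of {1..n} (here 'I_n),
   adjacent iff distinct and intersecting (line graph of K_n). *)
Definition tri_vertex (n : nat) := {A : {set 'I_n} | #|A| == 2}.

Definition tri_adj (n : nat) : rel (tri_vertex n) :=
  fun A B => (A != B) && (val A :&: val B != set0).

(* For an addressing f of length t, the quadratic form
   z |-> sum_(u,v) z_u z_v d(u,v) equals 2 sum_i alpha_i(z) beta_i(z), where
   alpha_i(z) (resp. beta_i(z)) is the total z-weight of the vertices whose
   i-th symbol is a (resp. b).  In T_n, d(u,v) = 2 - |u :&: v|, so on vectors
   of total weight 0 the same form is - sum_j s_j(z)^2, where s_j(z) is the
   weight of the vertices containing j.  If t < n, a dimension count shows that
   every alpha_i and beta_i vanishes on the kernel of s.  Differences of two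
   perfect matchings of a K_4 in K_n lie in that kernel, so in each coordinate
   the three matchings carry the same symbols a and b; a finite check then
   makes the three distances inside a star {ab, ac, ad} (a triangle of T_n)
   add up to an even number, although each of them is 1. *)

From HB Require Import structures.
From mathcomp Require Import all_boot all_algebra.
From mathcomp Require Import ring.
Set Implicit Arguments. Unset Strict Implicit. Unset Printing Implicit Defensive.
Import GRing.Theory Num.Theory.

Definition sym_eqb (x y : sym) : bool :=
  match x, y with S0, S0 | Sa, Sa | Sb, Sb => true | _, _ => false end.

Lemma sym_eqbP : Equality.axiom sym_eqb.
Proof. by case; case; constructor. Qed.

HB.instance Definition _ := hasDecEq.Build sym sym_eqbP.

(* [xkl] is the symbol carried by the edge kl of a K_4. *)
Lemma ab_pair_star_even (x01 x02 x03 x12 x13 x23 : sym) :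
  (forall sg, sg != S0 -> (x01 == sg) + (x23 == sg) = (x02 == sg) + (x13 == sg)) ->
  (forall sg, sg != S0 -> (x02 == sg) + (x13 == sg) = (x03 == sg) + (x12 == sg)) ->
  ~~ odd (ab_pair x01 x02 + ab_pair x01 x03 + ab_pair x02 x03).
Proof.
move=> /[dup] /(_ Sa isT) /eqP h1a /(_ Sb isT) /eqP h1b.
move=> /[dup] /(_ Sa isT) /eqP h2a /(_ Sb isT) /eqP h2b.
move: h1a h1b h2a h2b.
by case: x01; case: x02; case: x03; case: x12; case: x13; case: x23.
Qed.

Section GraphDistance.

Variables (T : finType) (e : rel T).

Lemma walk_of_len0 x y : walk_of_len e x y 0 -> x = y.
Proof. by case=> [[|z p] [//= _ _ ->]]. Qed.

Lemma walk_of_len1 x y : walk_of_len e x y 1 -> e x y.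
Proof. by case=> [[|z [|w p]] [//= _]]; rewrite andbT => exz <-. Qed.

Lemma is_dist_unique x y k k' : is_dist e x y k -> is_dist e x y k' -> k = k'.
Proof.
move=> [wk min_k] [wk' min_k']; case: (ltngtP k k') => // lt_kk'.
- by case: (min_k' _ lt_kk' wk).
- by case: (min_k _ lt_kk' wk').
Qed.

Lemma is_dist0 x : is_dist e x x 0.
Proof. by split=> //; exists [::]. Qed.

Lemma is_dist1 x y : x != y -> e x y -> is_dist e x y 1.
Proof.
move=> neq_xy exy; split=> [|[|//] _ /walk_of_len0 eq_xy]; first by exists [:: y]; rewrite /= exy.
by rewrite eq_xy eqxx in neq_xy.
Qed.

Lemma is_dist2 x y w : x != y -> ~~ e x y -> e x w -> e w y -> is_dist e x y 2.
Proof.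
move=> neq_xy nexy exw ewy; split=> [|[|[|//]] _]; first by exists [:: w; y]; rewrite /= exw ewy.
  by move/walk_of_len0 => eq_xy; rewrite eq_xy eqxx in neq_xy.
by move/walk_of_len1 => exy; rewrite exy in nexy.
Qed.

Lemma addressing_dist t (f : T -> 'I_t -> sym) x y k :
  addressing e f -> is_dist e x y k -> addr_dist (f x) (f y) = k.
Proof. by move=> addr_f; apply: is_dist_unique (addr_f x y). Qed.

End GraphDistance.

Lemma card_set2_eq2 (T : finType) (a b : T) : a != b -> #|[set a; b]| == 2%N.
Proof. by rewrite cards2 => ->. Qed.

Lemma in_set2_addn (T : finType) (a b j : T) :
  a != b -> (j \in [set a; b]) = (j == a) + (j == b) :> nat.
Proof. by rewrite !inE => hab; case: eqVneq => [->|] //=; rewrite (negbTE hab). Qed.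

Lemma card_setI_sum (T : finType) (A B : {set T}) :
  #|A :&: B| = (\sum_j (j \in A) * (j \in B))%N.
Proof.
rewrite -sum1_card big_mkcond /=; apply: eq_bigr => j _.
by rewrite inE; case: (j \in A); case: (j \in B).
Qed.

Section Triangular.

Variable n : nat.

Definition tri_edge (a b : 'I_n) (hab : a != b) : tri_vertex n :=
  exist _ [set a; b] (card_set2_eq2 hab).

Lemma card_tri_vertex (u : tri_vertex n) : #|val u| = 2%N.
Proof. exact/eqP/(valP u). Qed.

Lemma tri_vertex_eq_of_card_setI (u v : tri_vertex n) : #|val u :&: val v| = 2%N -> u = v.
Proof.
move=> card_uv; apply: val_inj.
have uvu : val u :&: val v = val u.
  by apply/eqP; rewrite eqEcard subsetIl card_uv card_tri_vertex.
have uvv : val u :&: val v = val v.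
  by apply/eqP; rewrite eqEcard subsetIr card_uv card_tri_vertex.
by rewrite -uvu uvv.
Qed.

Lemma tri_adj_neq (u v : tri_vertex n) : tri_adj u v -> u != v.
Proof. by case/andP. Qed.

Lemma tri_adjC (u v : tri_vertex n) : tri_adj u v = tri_adj v u.
Proof. by rewrite /tri_adj eq_sym setIC. Qed.

Lemma tri_adjI (u v : tri_vertex n) (x y : 'I_n) :
  x \in val u -> x \in val v -> y \notin val u -> y \in val v -> tri_adj u v.
Proof.
move=> xu xv yNu yv; apply/andP; split; last by apply/set0Pn; exists x; rewrite inE xu.
by apply: contraNneq yNu => ->.
Qed.

Lemma tri_adj_edge (a b c : 'I_n) (hab : a != b) (hac : a != c) :
  b != c -> tri_adj (tri_edge hab) (tri_edge hac).
Proof.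
move=> hbc; apply: (@tri_adjI _ _ a c); rewrite /= !inE ?eqxx ?orbT //.
by rewrite negb_or eq_sym hac eq_sym.
Qed.

Lemma tri_dist (u v : tri_vertex n) :
  is_dist (@tri_adj n) u v (2 - #|val u :&: val v|).
Proof.
have [<-|neq_uv] := eqVneq u v; first by rewrite setIid card_tri_vertex; exact: is_dist0.
have lt_uv2 : #|val u :&: val v| < 2.
  rewrite ltn_neqAle -[X in _ <= X](card_tri_vertex u) subset_leq_card ?subsetIl // andbT.
  by apply: contra neq_uv => /eqP /tri_vertex_eq_of_card_setI ->.
have [uv0|[a uva]] := set_0Vmem (val u :&: val v); last first.
  have -> : #|val u :&: val v| = 1%N.
    by apply/eqP; rewrite eqn_leq -ltnS lt_uv2 card_gt0; apply/set0Pn; exists a.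
  by apply: (is_dist1 neq_uv); rewrite /tri_adj neq_uv; apply/set0Pn; exists a.
have disj_uv : [disjoint val u & val v] by rewrite -setI_eq0 uv0.
have /card_gt0P [a ua] : 0 < #|val u| by rewrite card_tri_vertex.
have /card_gt0P [c vc] : 0 < #|val v| by rewrite card_tri_vertex.
have hac : a != c by apply: contraTneq vc => <-; rewrite (disjointFr disj_uv ua).
rewrite uv0 cards0; apply: (@is_dist2 _ _ _ _ (tri_edge hac)) => //.
- by rewrite /tri_adj uv0 eqxx andbF.
- by apply: (@tri_adjI _ _ a c); rewrite /= ?(disjointFl disj_uv vc) // !inE eqxx ?orbT.
- rewrite tri_adjC; apply: (@tri_adjI _ _ c a);
  by rewrite /= ?(disjointFr disj_uv ua) // !inE eqxx ?orbT.
Qed.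

End Triangular.

Local Open Scope ring_scope.

Lemma exists_rV_kernel (F : fieldType) p q (A : 'M[F]_(p, q)) :
  (q < p)%N -> exists2 v : 'rV_p, v *m A = 0 & v != 0.
Proof.
move=> lt_qp; have : kermx A != 0.
  by rewrite kermx_eq0 /row_free ltn_eqF // (leq_ltn_trans (rank_leq_col A)).
by case/rowV0Pn => v /sub_kermxP vA0 nz_v; exists v.
Qed.

Lemma sum_mul_eq1 (R : pzSemiRingType) (I : finType) (F : I -> R) (k : I) :
  \sum_i F i * (i == k)%:R = F k.
Proof.
by rewrite (bigD1 k) //= eqxx mulr1 big1 ?addr0 // => i /negbTE ->; rewrite mulr0.
Qed.

Lemma sum_mul_comb (R : comPzSemiRingType) (T I : finType)
    (w : T -> R) (x : I -> R) (F : I -> T -> R) :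
  \sum_u w u * \sum_k x k * F k u = \sum_k x k * \sum_u w u * F k u.
Proof.
under eq_bigr do rewrite mulr_sumr; rewrite exchange_big.
by apply: eq_bigr => k _; rewrite mulr_sumr; apply: eq_bigr => u _; rewrite mulrCA.
Qed.

Lemma sum_mul_matching_diff (R : pzRingType) (T : finType) (F : T -> R)
    (u1 u2 w1 w2 : T) :
  \sum_u F u * ((u == u1)%:R + (u == u2)%:R - ((u == w1)%:R + (u == w2)%:R))
  = F u1 + F u2 - (F w1 + F w2).
Proof.
under eq_bigr do rewrite mulrBr !mulrDr.
by rewrite sumrB !big_split /= !sum_mul_eq1.
Qed.

Definition sym_weight (R : pzSemiRingType) (T : finType) t (f : T -> 'I_t -> sym)
    (sg : sym) (i : 'I_t) (z : T -> R) : R :=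
  \sum_u (f u i == sg)%:R * z u.

Lemma ab_pairE (R : pzSemiRingType) (x y : sym) :
  (ab_pair x y)%:R = (x == Sa)%:R * (y == Sb)%:R + (x == Sb)%:R * (y == Sa)%:R :> R.
Proof. by case: x; case: y; rewrite /= ?(mul0r, mul1r, add0r, addr0). Qed.

Lemma addr_dist_form (R : comPzRingType) (T : finType) t
    (f : T -> 'I_t -> sym) (z : T -> R) :
  \sum_u \sum_v z u * z v * (addr_dist (f u) (f v))%:R
  = \sum_i sym_weight f Sa i z * sym_weight f Sb i z *+ 2.
Proof.
under eq_bigr do under eq_bigr do rewrite natr_sum mulr_sumr.
under eq_bigr do rewrite exchange_big; rewrite exchange_big; apply: eq_bigr => i _.
rewrite mulr2n [X in _ = _ + X]mulrC /sym_weight !mulr_suml -big_split.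
apply: eq_bigr => u _; rewrite !mulr_sumr -big_split; apply: eq_bigr => v _.
by rewrite /= ab_pairE; ring.
Qed.

Lemma gram_form (R : comPzRingType) (T : finType) n
    (X : T -> 'I_n -> R) (c : R) (z : T -> R) :
  \sum_u \sum_v z u * z v * (c - \sum_j X u j * X v j)
  = c * (\sum_u z u) ^+ 2 - \sum_j (\sum_u X u j * z u) ^+ 2.
Proof.
under eq_bigr do under eq_bigr do rewrite mulrBr mulr_sumr.
under eq_bigr do rewrite sumrB; rewrite sumrB; congr (_ - _).
  rewrite expr2 mulr_suml mulr_sumr; apply: eq_bigr => u _.
  by rewrite !mulr_sumr; apply: eq_bigr => v _; ring.
under eq_bigr do rewrite exchange_big; rewrite exchange_big; apply: eq_bigr => j _.
rewrite expr2 mulr_suml; apply: eq_bigr => u _.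
by rewrite mulr_sumr; apply: eq_bigr => v _; ring.
Qed.

Section GramAddressing.

Variables (R : realFieldType) (T : finType) (t n : nat).
Variables (f : T -> 'I_t -> sym) (X : T -> 'I_n -> R) (c : R).

Hypothesis addr_dist_gram :
  forall u v, (addr_dist (f u) (f v))%:R = c - \sum_j X u j * X v j.

Lemma gram_coord_eq0 (y : T -> R) (sg : sym) :
  sg != S0 -> \sum_u y u = 0 -> (forall i, sym_weight f sg i y = 0) ->
  forall j, \sum_u X u j * y u = 0.
Proof.
move=> sgN0 sum_y0 wy0.
have form0 : \sum_u \sum_v y u * y v * (c - \sum_j X u j * X v j) = 0.
  under eq_bigr do under eq_bigr do rewrite -addr_dist_gram.
  rewrite addr_dist_form big1 // => i _.
  by case: sg sgN0 wy0 => // _ /(_ i) ->; rewrite ?mul0r ?mulr0 mul0rn.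
move: form0; rewrite gram_form sum_y0 expr0n mulr0 sub0r => /eqP.
rewrite oppr_eq0 => /eqP /psumr_eq0P sq0 j; apply/eqP; rewrite -sqrf_eq0; apply/eqP.
by apply: sq0 => // k _; exact: sqr_ge0.
Qed.

Hypothesis coord_onto :
  forall k, exists w : T -> R, forall j, \sum_u X u j * w u = (j == k)%:R.
Hypothesis lt_tn : (t < n)%N.

Lemma sym_weight_coord_ker (z : T -> R) :
  (forall j, \sum_u X u j * z u = 0) ->
  forall sg i, sg != S0 -> sym_weight f sg i z = 0.
Proof.
move=> z_ker sg i0 sgN0.
have [b b_delta] := fin_all_exists coord_onto.
pose F (k : 'I_n.+1) := if unlift ord0 k is Some k' then b k' else z.
pose W (r : 'I_t.+1) u : R := if unlift ord0 r is Some i then (f u i == sg)%:R else 1.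
(* n+1 unknown coefficients of z and the b k, but only t+1 linear constraints W r. *)
have [x xA0 x_neq0] := exists_rV_kernel (\matrix_(k, r) \sum_u W r u * F k u) lt_tn.
pose y u := \sum_k x 0 k * F k u.
have Wy0 r : \sum_u W r u * y u = 0.
  have /rowP/(_ r) := xA0; rewrite !mxE => xA0r.
  by rewrite sum_mul_comb -[RHS]xA0r; apply: eq_bigr => k _; rewrite mxE.
have y_ker j : \sum_u X u j * y u = 0.
  apply: (gram_coord_eq0 sgN0).
    by have := Wy0 ord0; under eq_bigr do rewrite /W unlift_none mul1r.
  by move=> i; have := Wy0 (lift ord0 i); rewrite /W liftK.
have x_lift0 k : x 0 (lift ord0 k) = 0.
  have := y_ker k; rewrite sum_mul_comb big_ord_recl /F unlift_none z_ker mulr0 add0r.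
  under eq_bigr do rewrite liftK b_delta eq_sym.
  by rewrite sum_mul_eq1.
have x0_neq0 : x 0 ord0 != 0.
  apply: contraNneq x_neq0 => x00; apply/eqP/rowP => k; rewrite mxE.
  by case: (unliftP ord0 k) => [k' ->|->].
have yE u : y u = x 0 ord0 * z u.
  by rewrite /y big_ord_recl /F unlift_none big1 ?addr0 // => k _; rewrite x_lift0 mul0r.
have := Wy0 (lift ord0 i0); rewrite /W liftK.
under eq_bigr do rewrite yE mulrCA; rewrite -mulr_sumr => /eqP.
by rewrite mulf_eq0 (negbTE x0_neq0) => /eqP.
Qed.

End GramAddressing.

Lemma tri_coord_onto (R : numFieldType) n (hn : (2 < n)%N) (k : 'I_n) :
  exists w : tri_vertex n -> R,
    forall j, \sum_(u : tri_vertex n) (j \in val u)%:R * w u = (j == k)%:R.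
Proof.
have /card_gt1P [b [c [bk ck hbc]]] : (1 < #|[set~ k]|)%N.
  by rewrite cardsC1 card_ord -ltnS prednK // (ltn_trans _ hn).
rewrite !inE eq_sym in bk; rewrite !inE eq_sym in ck.
exists (fun u => 2^-1 *
  ((u == tri_edge bk)%:R + (u == tri_edge ck)%:R - (u == tri_edge hbc)%:R)) => j.
under eq_bigr do rewrite mulrCA; rewrite -mulr_sumr.
under eq_bigr do rewrite mulrBr mulrDr.
rewrite sumrB big_split /= !sum_mul_eq1 /= !in_set2_addn // !natrD.
by field.
Qed.

Section TriangularAddressing.

Variables (n t : nat) (f : tri_vertex n -> 'I_t -> sym).
Hypothesis addr_f : addressing (@tri_adj n) f.

Lemma tri_addr_dist_adj u v : tri_adj u v -> addr_dist (f u) (f v) = 1%N.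
Proof.
by move=> adj_uv; apply: addressing_dist addr_f (is_dist1 (tri_adj_neq adj_uv) adj_uv).
Qed.

Lemma tri_addr_dist_gram (R : pzRingType) u v :
  (addr_dist (f u) (f v))%:R = 2 - \sum_j (j \in val u)%:R * (j \in val v)%:R :> R.
Proof.
rewrite (addressing_dist addr_f (tri_dist u v)) natrB; last first.
  by rewrite -[X in (_ <= X)%N](card_tri_vertex u) subset_leq_card ?subsetIl.
by rewrite card_setI_sum natr_sum; under eq_bigr do rewrite natrM.
Qed.

Hypotheses (lt_tn : (t < n)%N) (hn : (2 < n)%N).

Lemma tri_balanced (u1 u2 w1 w2 : tri_vertex n) :
  (forall j, (j \in val u1) + (j \in val u2) = (j \in val w1) + (j \in val w2))%N ->
  forall i sg, sg != S0 ->
  ((f u1 i == sg) + (f u2 i == sg) = (f w1 i == sg) + (f w2 i == sg))%N.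
Proof.
move=> same_cover i sg sgN0.
pose z u : rat := (u == u1)%:R + (u == u2)%:R - ((u == w1)%:R + (u == w2)%:R).
have z_ker j : \sum_(u : tri_vertex n) (j \in val u)%:R * z u = 0.
  by rewrite sum_mul_matching_diff -!natrD same_cover subrr.
have := sym_weight_coord_ker (@tri_addr_dist_gram rat) (tri_coord_onto _ hn) lt_tn
  z_ker i sgN0.
rewrite /sym_weight sum_mul_matching_diff => /eqP.
by rewrite subr_eq0 -!natrD eqr_nat => /eqP.
Qed.

Lemma tri_star_even (a b c d : 'I_n) (hab : a != b) (hac : a != c) (had : a != d)
    (hbc : b != c) (hbd : b != d) (hcd : c != d) :
  let ab := f (tri_edge hab) in let ac := f (tri_edge hac) in let ad := f (tri_edge had) in
  ~~ odd (addr_dist ab ac + addr_dist ab ad + addr_dist ac ad).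
Proof.
rewrite /addr_dist -!big_split /=.
apply: (big_ind (fun m => ~~ odd m)) => // [m1 m2 | i _].
  by rewrite oddD => /negbTE -> /negbTE ->.
apply: (@ab_pair_star_even _ _ _ (f (tri_edge hbc) i) (f (tri_edge hbd) i) (f (tri_edge hcd) i));
  by move=> sg sgN0; apply: tri_balanced => // j /=; rewrite !in_set2_addn //; ring.
Qed.

End TriangularAddressing.

Local Close Scope ring_scope.

Theorem theorem17 (n : nat) (hn : 4 <= n) (t : nat) (f : tri_vertex n -> 'I_t -> sym) :
  addressing (@tri_adj n) f -> n <= t.
Proof.
move=> addr_f; rewrite leqNgt; apply/negP => lt_tn.
pose p := widen_ord hn.
have p_neq (k l : 'I_4) : k != l -> p k != p l by [].
have := tri_star_even addr_f lt_tn (ltnW hn) (p_neq 0%R 1%R isT) (p_neq 0%R 2%R isT)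
  (p_neq 0%R 3%R isT) (p_neq 1%R 2%R isT) (p_neq 1%R 3%R isT) (p_neq 2%R 3%R isT).
by rewrite /= !tri_addr_dist_adj ?tri_adj_edge.
Qed.
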